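(* Let $\varphi:\mathbb{R}^n\to(-\infty,\infty]$ be prox-bounded and lower semicontinuous around $\bar x\in\operatorname{dom}\varphi$. Then for all $\lambda>0$ sufficiently small the following are equivalent: (i) $\bar x$ is a local minimizer of $\varphi$; (ii) $\bar x$ is a local minimizer of the Moreau envelope $e_\lambda\varphi$.
   Context: For a proper function $\varphi:\mathbb{R}^n\to(-\infty,\infty]$ and $\lambda>0$, the Moreau envelope is $e_\lambda\varphi(x):=\inf_{y\in\mathbb{R}^n}\{\varphi(y)+\frac{1}{2\lambda}\|y-x\|^2\}$ and the proximal mapping is $\operatorname{Prox}_{\lambda\varphi}(x):=\operatorname{argmin}_{y}\{\varphi(y)+\frac{1}{2\lambda}\|y-x\|^2\}$. The function $\varphi$ is prox-bounded if there is $\lambda>0$ with $e_\lambda\varphi(x)>-\infty$ for some $x$. A point $\bar x\in\operatorname{dom}\varphi$ is a local minimizer of $\varphi$ if $\varphi(x)\ge\varphi(\bar x)$ for all $x$ in some neighborhood of $\bar x$. *)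

From HB Require Import structures.
From mathcomp Require Import all_boot all_order all_algebra.
From mathcomp Require Import all_classical all_reals ereal.
Set Implicit Arguments. Unset Strict Implicit. Unset Printing Implicit Defensive.
Import Order.TTheory GRing.Theory Num.Theory.
Local Open Scope ring_scope.
Local Open Scope classical_set_scope.
Local Open Scope ereal_scope.

(* R^n is modelled by row vectors 'rV[R]_n; functions with values in
   (-oo, +oo] are modelled as maps into \bar R that never take the value -oo. *)

Definition sqnorm {R : realType} {n : nat} (x : 'rV[R]_n) : R :=
  (\sum_(i < n) (x ord0 i) ^+ 2)%R.

Definition never_minfty {R : realType} {n : nat} (phi : 'rV[R]_n -> \bar R) :=
  forall x, phi x != -oo.

Definition in_dom {R : realType} {n : nat} (phi : 'rV[R]_n -> \bar R) (x : 'rV[R]_n) :=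
  phi x < +oo.

Definition moreau_env {R : realType} {n : nat} (lam : R) (phi : 'rV[R]_n -> \bar R)
  (x : 'rV[R]_n) : \bar R :=
  ereal_inf (range (fun y => phi y + (((2 * lam)^-1 * sqnorm (y - x))%R)%:E)).

Definition prox_bounded {R : realType} {n : nat} (phi : 'rV[R]_n -> \bar R) :=
  exists lam : R, (0 < lam)%R /\ exists x, -oo < moreau_env lam phi x.

Definition lsc_at {R : realType} {n : nat} (phi : 'rV[R]_n -> \bar R) (x : 'rV[R]_n) :=
  forall a : R, a%:E < phi x ->
    exists eps : R, (0 < eps)%R /\
      forall y, (sqnorm (y - x) < eps ^+ 2)%R -> a%:E < phi y.

Definition lsc_around {R : realType} {n : nat} (phi : 'rV[R]_n -> \bar R) (xbar : 'rV[R]_n) :=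
  exists eps : R, (0 < eps)%R /\
    forall x, (sqnorm (x - xbar) < eps ^+ 2)%R -> lsc_at phi x.

Definition local_minimizer {R : realType} {n : nat} (f : 'rV[R]_n -> \bar R) (xbar : 'rV[R]_n) :=
  in_dom f xbar /\
  exists eps : R, (0 < eps)%R /\
    forall x, (sqnorm (x - xbar) < eps ^+ 2)%R -> f xbar <= f x.

From HB Require Import structures.
From mathcomp Require Import all_boot all_order all_algebra.
From mathcomp Require Import all_classical all_reals ereal.
From mathcomp Require Import ring lra.
Import Order.TTheory GRing.Theory Num.Theory.
Set Implicit Arguments.
Unset Strict Implicit.
Local Open Scope ring_scope.

(* Prox-boundedness yields a quadratic minorant of phi, so for lam small the
   quadratic term in the envelope dominates far from xbar. Hence, if xbar is a
   local minimizer of phi, the infimum defining e_lam phi(x) for x near xbar is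
   attained only by points near xbar, and e_lam phi(x) >= phi(xbar) >= e_lam phi(xbar).
   Conversely, if xbar locally minimizes the envelope, lower semicontinuity forces
   e_lam phi(xbar) = phi(xbar): otherwise a near-minimizer y would lie at a fixed
   distance from xbar, and shifting the base point from xbar towards y would lower
   the envelope. Then phi(xbar) = e_lam phi(xbar) <= e_lam phi(x) <= phi(x). *)

Section SquaredNorm.
Context {R : realType} {n : nat}.
Implicit Types (a b c v : 'rV[R]_n).

Lemma sqnorm_ge0 v : 0 <= sqnorm v.
Proof. by apply: sumr_ge0 => i _; rewrite sqr_ge0. Qed.

Lemma sqnorm0 : sqnorm (0 : 'rV[R]_n) = 0.
Proof. by rewrite /sqnorm big1 // => i _; rewrite mxE expr0n. Qed.

Lemma sqnormZ (t : R) v : sqnorm (t *: v) = t ^+ 2 * sqnorm v.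
Proof. by rewrite /sqnorm mulr_sumr; apply: eq_bigr => i _; rewrite mxE exprMn. Qed.

Lemma sqnormB_le a b c : sqnorm (a - c) <= 2 * sqnorm (a - b) + 2 * sqnorm (b - c).
Proof.
rewrite /sqnorm !mulr_sumr -big_split /=; apply: ler_sum => i _.
rewrite !mxE; set u := a ord0 i - b ord0 i; set w := b ord0 i - c ord0 i.
have -> : a ord0 i - c ord0 i = u + w by rewrite /u /w addrA subrK.
have := sqr_ge0 (u - w); nra.
Qed.

Lemma sqnorm_segment_point a b (s : R) : 0 < s -> s <= sqnorm (b - a) ->
  exists c, sqnorm (c - a) <= s /\ sqnorm (b - c) <= sqnorm (b - a) - s.
Proof.
set Q := sqnorm (b - a) => s0 sQ; have Q0 : 0 < Q by apply: lt_le_trans sQ.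
have tle1 : s / Q <= 1 by rewrite ler_pdivrMr // mul1r.
have sst : s * (s / Q) <= s by rewrite ler_piMr // ltW.
exists (a + (s / Q) *: (b - a)); split.
  rewrite addrC addKr sqnormZ -/Q.
  by have -> : (s / Q) ^+ 2 * Q = s * (s / Q) by field; rewrite gt_eqF.
have -> : b - (a + (s / Q) *: (b - a)) = (1 - s / Q) *: (b - a).
  by rewrite scalerBl scale1r opprD addrA.
rewrite sqnormZ -/Q.
have -> : (1 - s / Q) ^+ 2 * Q = Q - 2 * s + s * (s / Q) by field; rewrite gt_eqF.
lra.
Qed.

End SquaredNorm.

Definition quadratic_minorant {R : realType} {n : nat} (phi : 'rV[R]_n -> \bar R)
    (l : R) (x1 : 'rV[R]_n) (c : R) :=
  forall y, (c%:E <= phi y + ((2 * l)^-1 * sqnorm (y - x1))%:E)%E.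

Section MoreauEnvelope.
Context {R : realType} {n : nat}.
Implicit Types (phi : 'rV[R]_n -> \bar R) (x y : 'rV[R]_n).

Lemma moreau_env_le phi lam x y :
  (moreau_env lam phi x <= phi y + ((2 * lam)^-1 * sqnorm (y - x))%:E)%E.
Proof. by apply: ereal_inf_lbound; exists y. Qed.

Lemma moreau_env_ge phi lam x z :
  (forall y, z <= phi y + ((2 * lam)^-1 * sqnorm (y - x))%:E)%E ->
  (z <= moreau_env lam phi x)%E.
Proof. by move=> hz; apply: le_ereal_inf_tmp => _ [y _ <-]. Qed.

Lemma moreau_env_le_phi phi lam x : (moreau_env lam phi x <= phi x)%E.
Proof. by have := moreau_env_le phi lam x x; rewrite subrr sqnorm0 mulr0 adde0. Qed.

Lemma prox_bounded_quadratic_minorant phi :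
  prox_bounded phi -> exists l x1 c, 0 < l /\ quadratic_minorant phi l x1 c.
Proof.
move=> [l [l0 [x1]]]; case Ee : (moreau_env l phi x1) => [e| |] // _.
- by exists l, x1, e; split=> // y; rewrite -Ee; exact: moreau_env_le.
- exists l, x1, 0; split=> // y; apply: le_trans (leey _) _.
  by rewrite -Ee; exact: moreau_env_le.
Qed.

Lemma quadratic_minorant_gt_ninfty phi l x1 c :
  quadratic_minorant phi l x1 c -> forall y, (-oo < phi y)%E.
Proof. by move=> hc y; move: (hc y); case: (phi y) => //= r _; rewrite ltNyr. Qed.

Lemma quadratic_minorant_shift phi l x1 c lam :
  quadratic_minorant phi l x1 c -> 0 < lam -> 4 * lam <= l -> forall x y,
  ((c - sqnorm (x - x1) / l + sqnorm (y - x) / (4 * lam))%:E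
     <= phi y + ((2 * lam)^-1 * sqnorm (y - x))%:E)%E.
Proof.
move=> hc lam0 hl x y; have l0 : 0 < l by lra.
move: (hc y); case: (phi y) => [p| |] //= hp; last by rewrite addye ?leey.
rewrite -EFinD lee_fin; rewrite -EFinD lee_fin in hp.
have := sqnormB_le y x x1; have := sqnorm_ge0 (y - x); have := sqnorm_ge0 (x - x1).
move: hp; set T := sqnorm (y - x1); set Q := sqnorm (y - x); set S := sqnorm (x - x1).
move=> hp S0 Q0 hT.
have hQ : Q / l <= Q / (4 * lam) by rewrite ler_wpM2l // lef_pV2 ?posrE ?mulr_gt0.
have hTl : T / l <= 2 * (Q / l) + 2 * (S / l).
  by rewrite !mulrA -mulrDl; apply: ler_wpM2r => //; rewrite invr_ge0 ltW.
have -> : (2 * lam)^-1 * Q = Q / (4 * lam) * 2 by field; rewrite gt_eqF.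
have e1 : (2 * l)^-1 * T = T / l / 2 by field; rewrite gt_eqF.
lra.
Qed.

Lemma moreau_env_ge_minorant phi l x1 c lam x :
  quadratic_minorant phi l x1 c -> 0 < lam -> 4 * lam <= l ->
  ((c - sqnorm (x - x1) / l)%:E <= moreau_env lam phi x)%E.
Proof.
move=> hc lam0 hl; apply: moreau_env_ge => y.
apply: le_trans (quadratic_minorant_shift hc lam0 hl x y); rewrite lee_fin lerDl.
by rewrite divr_ge0 ?sqnorm_ge0 // mulr_ge0 // ltW.
Qed.

End MoreauEnvelope.

Section LocalMinimizers.
Context {R : realType} {n : nat}.
Implicit Types (phi : 'rV[R]_n -> \bar R) (x y xbar : 'rV[R]_n).

(* For x within eps/2 of xbar, every y outside the eps-ball satisfies
   |y - x|^2 >= eps^2/4; this is where eps^2/(16 lam) = (eps^2/4)/(4 lam) comes from. *)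
Lemma local_min_le_moreau_env phi l x1 c lam xbar (eps : R) :
  quadratic_minorant phi l x1 c -> 0 < lam -> 4 * lam <= l ->
  (forall y, sqnorm (y - xbar) < eps ^+ 2 -> (phi xbar <= phi y)%E) ->
  (phi xbar <= (c - (eps ^+ 2 / 2 + 2 * sqnorm (xbar - x1)) / l
                 + eps ^+ 2 / (16 * lam))%:E)%E ->
  forall x, sqnorm (x - xbar) < eps ^+ 2 / 4 -> (phi xbar <= moreau_env lam phi x)%E.
Proof.
move=> hc lam0 hl hmin hlam x hx; have l0 : 0 < l by lra.
apply: moreau_env_ge => y.
have [near|far] := ltP (sqnorm (y - xbar)) (eps ^+ 2).
  apply: le_trans (hmin y near) _; rewrite leeDl // lee_fin.
  by rewrite mulr_ge0 ?sqnorm_ge0 // invr_ge0 mulr_ge0 // ltW.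
apply: le_trans hlam (le_trans _ (quadratic_minorant_shift hc lam0 hl x y)).
rewrite lee_fin -addrA -[leRHS]addrA lerD2l.
have := sqnormB_le y x xbar; have := sqnormB_le x xbar x1.
set Q := sqnorm (y - x); set S := sqnorm (x - x1); set K := sqnorm (xbar - x1).
move=> hS hQ.
have hSl : S / l <= (eps ^+ 2 / 2 + 2 * K) / l.
  by rewrite ler_pM2r ?invr_gt0 //; lra.
have hQl : eps ^+ 2 / (16 * lam) <= Q / (4 * lam).
  have -> : eps ^+ 2 / (16 * lam) = eps ^+ 2 / 16 / lam by field; rewrite gt_eqF.
  have -> : Q / (4 * lam) = Q / 4 / lam by field; rewrite gt_eqF.
  by rewrite ler_pM2r ?invr_gt0 //; lra.
lra.
Qed.

Lemma moreau_env_local_min_of_local_min phi l x1 c xbar :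
  quadratic_minorant phi l x1 c -> 0 < l -> local_minimizer phi xbar ->
  exists lam0 : R, 0 < lam0 /\ forall lam, 0 < lam -> lam < lam0 ->
    local_minimizer (moreau_env lam phi) xbar.
Proof.
move=> hc l0 [+ [eps [eps0 hmin]]]; rewrite /in_dom.
case Ef : (phi xbar) (quadratic_minorant_gt_ninfty hc xbar) => [f| |] // _ _.
set d := f - (c - (eps ^+ 2 / 2 + 2 * sqnorm (xbar - x1)) / l).
have N0 : 0 < `|d| + 1 by rewrite ltr_pwDr ?normr_ge0.
exists (Num.min (l / 4) (eps ^+ 2 / (16 * (`|d| + 1)))); split.
  by rewrite lt_min !divr_gt0 ?exprn_gt0 ?mulr_gt0.
move=> lam lam0; rewrite lt_min => /andP[hl hsmall].
have hl4 : 4 * lam <= l by lra.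
have hf : (phi xbar <= (c - (eps ^+ 2 / 2 + 2 * sqnorm (xbar - x1)) / l
                          + eps ^+ 2 / (16 * lam))%:E)%E.
  rewrite Ef lee_fin -lerBlDl ler_pdivlMr ?mulr_gt0 //.
  move: hsmall; rewrite ltr_pdivlMr ?mulr_gt0 // => hsmall.
  have hd : d * (16 * lam) <= (`|d| + 1) * (16 * lam).
    apply: ler_wpM2r; first by rewrite mulr_ge0 // ltW.
    by apply: le_trans (ler_norm d) _; rewrite lerDl.
  have : (`|d| + 1) * (16 * lam) = lam * (16 * (`|d| + 1)) by ring.
  by rewrite -/d; lra.
have hnear := local_min_le_moreau_env hc lam0 hl4 hmin hf.
split; first by apply: le_lt_trans (moreau_env_le_phi _ _ _) _; rewrite Ef ltey.
exists (eps / 2); split; first by rewrite divr_gt0.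
move=> x hx; apply: (le_trans (moreau_env_le_phi _ _ _)); apply: hnear.
by have -> : eps ^+ 2 / 4 = (eps / 2) ^+ 2 by field.
Qed.

Lemma moreau_env_local_min_ge phi lam xbar (m a del : R) :
  0 < lam -> 0 < del -> moreau_env lam phi xbar = m%:E ->
  local_minimizer (moreau_env lam phi) xbar ->
  (forall y, sqnorm (y - xbar) < del ^+ 2 -> (a%:E < phi y)%E) -> a <= m.
Proof.
move=> lam0 del0 hm [_ [eps [eps0 hmin]]] hdel; rewrite leNgt; apply/negP => ma.
set s := Num.min (del ^+ 2) (eps ^+ 2 / 2).
have s0 : 0 < s by rewrite lt_min !exprn_gt0 //= divr_gt0 // exprn_gt0.
have sd : s <= del ^+ 2 by rewrite ge_min lexx.
have se : s < eps ^+ 2.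
  have : s <= eps ^+ 2 / 2 by rewrite ge_min lexx orbT.
  have : 0 < eps ^+ 2 by rewrite exprn_gt0.
  lra.
set eta := Num.min (a - m) (s / (2 * lam)).
have eta0 : 0 < eta by rewrite lt_min subr_gt0 ma divr_gt0 ?mulr_gt0.
have eta_a : eta <= a - m by rewrite ge_min lexx.
have eta_s : eta <= s / (2 * lam) by rewrite ge_min lexx orbT.
have : (moreau_env lam phi xbar < (m + eta)%:E)%E by rewrite hm lte_fin ltrDl.
case/ereal_inf_lt => _ [y _ <-]; set Q := sqnorm (y - xbar).
case Ep : (phi y) => [p| |] //; last first.
  by have := moreau_env_le phi lam xbar y; rewrite hm Ep.
rewrite -EFinD lte_fin => hy.
have Q0 : 0 <= (2 * lam)^-1 * Q by rewrite mulr_ge0 ?sqnorm_ge0 // invr_ge0 mulr_ge0 // ltW.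
have [near|far] := ltP Q (del ^+ 2).
  by have := hdel y near; rewrite Ep lte_fin; lra.
(* Move the base point a squared distance s towards the far near-minimizer y:
   this gains s/(2 lam) >= eta in the envelope, contradicting local minimality. *)
have [z [hz hyz]] := sqnorm_segment_point s0 (le_trans sd far).
have := le_trans (hmin z (le_lt_trans hz se)) (moreau_env_le phi lam z y).
rewrite hm Ep -EFinD lee_fin => hmz.
have : (2 * lam)^-1 * sqnorm (y - z) <= (2 * lam)^-1 * (Q - s).
  by rewrite ler_wpM2l // invr_ge0 mulr_ge0 // ltW.
have : s / (2 * lam) = (2 * lam)^-1 * Q - (2 * lam)^-1 * (Q - s) by ring.
lra.
Qed.

Lemma local_min_of_moreau_env_local_min phi l x1 c lam xbar :
  quadratic_minorant phi l x1 c -> 0 < lam -> 4 * lam <= l ->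
  lsc_at phi xbar -> in_dom phi xbar ->
  local_minimizer (moreau_env lam phi) xbar -> local_minimizer phi xbar.
Proof.
move=> hc lam0 hl hlsc hdom hmin; split => //.
have [_ [eps [eps0 hnear]]] := hmin.
have := moreau_env_ge_minorant xbar hc lam0 hl; have := hmin.1.
rewrite /in_dom; case Em : (moreau_env lam phi xbar) => [m| |] // _ _.
have := quadratic_minorant_gt_ninfty hc xbar; move: hdom hlsc; rewrite /in_dom.
case Ef : (phi xbar) => [f| |] // _ hlsc _.
have fm : f <= m.
  rewrite leNgt; apply/negP => mf.
  have [del [del0 hdel]] : exists del : R, 0 < del /\
      forall y, sqnorm (y - xbar) < del ^+ 2 -> (((m + f) / 2)%:E < phi y)%E.
    by apply: hlsc; rewrite Ef lte_fin; lra.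
  have := moreau_env_local_min_ge lam0 del0 Em hmin hdel; lra.
exists eps; split => // x hx.
apply: le_trans (moreau_env_le_phi phi lam x); apply: le_trans (hnear x hx).
by rewrite Em lee_fin.
Qed.

End LocalMinimizers.

Theorem theorem3p2 (R : realType) (n : nat) (phi : 'rV[R]_n -> \bar R)
  (xbar : 'rV[R]_n) :
  never_minfty phi -> prox_bounded phi -> lsc_around phi xbar -> in_dom phi xbar ->
  exists lam0 : R, 0 < lam0 /\
    forall lam : R, 0 < lam -> lam < lam0 ->
      (local_minimizer phi xbar <-> local_minimizer (moreau_env lam phi) xbar).
Proof.
(* Excluding the value -oo is redundant: prox-boundedness already implies it
   (quadratic_minorant_gt_ninfty). *)
move=> _ /prox_bounded_quadratic_minorant [l [x1 [c [l0 hc]]]] [r [r0 hr]] hdom.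
have hlsc : lsc_at phi xbar by apply: hr; rewrite subrr sqnorm0 exprn_gt0.
have env_to_phi lam : 0 < lam -> lam < l / 4 ->
    local_minimizer (moreau_env lam phi) xbar -> local_minimizer phi xbar.
  by move=> lam0 hl; apply: (local_min_of_moreau_env_local_min hc lam0) => //; lra.
have [hmin|hnmin] := pselect (local_minimizer phi xbar).
- have [lam0 [lam0_gt0 phi_to_env]] := moreau_env_local_min_of_local_min hc l0 hmin.
  exists (Num.min lam0 (l / 4)); split; first by rewrite lt_min lam0_gt0 divr_gt0.
  move=> lam lam_gt0; rewrite lt_min => /andP[h1 h2].
  by split=> [_|]; [exact: phi_to_env | exact: env_to_phi].
- exists (l / 4); split; first by rewrite divr_gt0.
  by move=> lam lam_gt0 hl; split=> [/hnmin [] |]; exact: env_to_phi.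
Qed.
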